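(* Let $n$ be a positive integer and let $A(n)=(a_{ij})_{i,j\in\mathbb{N}}$ be the greedy matrix described in the context. For each $i\geq 1$ let $g(i)$ be the smallest $j$ such that $a_{ij}=1$. Then $g$ is monotonically increasing, i.e. $g(i+1)\geq g(i)$ for all $i\ge 1$.
   Context: $\mathbb{N}=\{1,2,3,\dots\}$. Fix a positive integer $n$. The infinite $\{0,1\}$-matrix $A(n)=(a_{ij})_{i,j\in\mathbb{N}}$ is defined recursively. Its entries are determined row by row (row $1$ first), and within each row from left to right, so that $a_{kl}$ is determined after all $a_{ij}$ with $i<k$ and all $a_{kj}$ with $j<l$. One sets $a_{kl}=1$ if and only if all of the following hold: (1) $\sum_{j<l}a_{kj}<n+1$; (2) $\sum_{i<k}a_{il}<n+1$; (3) there is no pair $(i,j)$ with $1\le i<k$, $1\le j<l$ and $a_{ij}=a_{il}=a_{kj}=1$. Otherwise $a_{kl}=0$. *)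

From mathcomp Require Import all_boot.
Set Implicit Arguments. Unset Strict Implicit. Unset Printing Implicit Defensive.

(* Indices are 1-based (rows/columns in {1,2,...});
   index 0 is unused and the entry there is set to false.
   The entry a_{kl} depends only on entries (i,j) with i <= k, j <= l,
   (i,j) <> (k,l), all of which have strictly smaller i + j.  We therefore
   compute it by recursion on a fuel s >= k + l. *)

Definition greedy_rule (n : nat) (b : nat -> nat -> bool) (k l : nat) : bool :=
  [&& (\sum_(1 <= j < l) b k j < n.+1)%N,
      (\sum_(1 <= i < k) b i l < n.+1)%N &
      ~~ has (fun i => has (fun j => [&& b i j, b i l & b k j]) (iota 1 l.-1))
             (iota 1 k.-1)].

Fixpoint greedy_aux (n s : nat) (k l : nat) : bool :=
  match s with
  | 0 => false
  | s'.+1 => [&& 0 < k, 0 < l & greedy_rule n (greedy_aux n s') k l]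
  end.

(* a n k l  is the entry a_{kl} of A(n) (true = 1, false = 0). *)
Definition greedyA (n k l : nat) : bool := greedy_aux n (k + l) k l.

From mathcomp Require Import all_boot.
From mathcomp Require Import zify.

(* The first 1 of a row sits at the first column [l] whose part above row [k]
   still has fewer than n+1 ones: before it the row is empty, so neither the
   row bound nor the rectangle condition can block position (k, l).
   Such a column exists because rows 1..k-1 contain at most (k-1)(n+1) ones
   altogether.  Monotonicity: if g(i+1) < g(i), then a_{i,g(i+1)} = 0 with
   row i empty before it, so the column above row i is already full, hence
   also above row i+1, contradicting a_{i+1,g(i+1)} = 1. *)

Definition row_count (n k l : nat) : nat := \sum_(1 <= j < l) greedyA n k j.

Definition col_count (n k l : nat) : nat := \sum_(1 <= i < k) greedyA n i l.

Lemma greedy_rule_congr n (b1 b2 : nat -> nat -> bool) k l :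
  (forall i j, i + j < k + l -> b1 i j = b2 i j) ->
  greedy_rule n b1 k l = greedy_rule n b2 k l.
Proof.
move=> eq_b; rewrite /greedy_rule; congr [&& _ , _ & _].
- by congr (_ < _); apply: eq_big_nat => j /andP[_ ltjl]; rewrite eq_b // ltn_add2l.
- by congr (_ < _); apply: eq_big_nat => i /andP[_ ltik]; rewrite eq_b // ltn_add2r.
- congr negb; apply: eq_in_has => i; rewrite mem_iota => /andP[i_gt0 ltik].
  apply: eq_in_has => j; rewrite mem_iota => /andP[j_gt0 ltjl].
  by rewrite !eq_b //; lia.
Qed.

Lemma greedy_aux_fuel n s1 s2 k l : k + l <= s1 -> k + l <= s2 ->
  greedy_aux n s1 k l = greedy_aux n s2 k l.
Proof.
elim: s1 s2 k l => [|s1 IH] [|s2] [|k] [|l] //= le_s1 le_s2.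
apply: greedy_rule_congr => i j lt_ij; apply: IH.
- by rewrite -ltnS (leq_trans lt_ij le_s1).
- by rewrite -ltnS (leq_trans lt_ij le_s2).
Qed.

Lemma greedyA_gt0 {n k l} : greedyA n k l -> 0 < k /\ 0 < l.
Proof. by rewrite /greedyA; case: (k + l) => //= s /and3P[]. Qed.

Lemma greedyA_unfold n k l : 0 < k -> 0 < l ->
  greedyA n k l = greedy_rule n (greedyA n) k l.
Proof.
move=> k_gt0 l_gt0; rewrite /greedyA.
case def_s: (k + l) => [|s]; first by move: def_s; case: k k_gt0.
rewrite /= k_gt0 l_gt0; apply: greedy_rule_congr => i j lt_ij.
by apply: greedy_aux_fuel; rewrite // -ltnS -def_s.
Qed.

Lemma greedyA_after_empty_row n k l : 0 < k -> 0 < l ->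
  (forall j, 0 < j < l -> ~~ greedyA n k j) ->
  greedyA n k l = (col_count n k l < n.+1).
Proof.
move=> k_gt0 l_gt0 row_empty; rewrite greedyA_unfold // /greedy_rule.
rewrite big_nat big1 => [|j /row_empty/negbTE -> //].
have -> : has (fun i => has (fun j => [&& greedyA n i j, greedyA n i l & greedyA n k j])
  (iota 1 l.-1)) (iota 1 k.-1) = false.
  apply/hasPn => i _; apply/hasPn => j; rewrite mem_iota => /andP[j_gt0 ltjl].
  by rewrite (negbTE (row_empty j _)) ?andbF // j_gt0; lia.
by rewrite andbT.
Qed.

Lemma row_count_le n k l : row_count n k l <= n.+1.
Proof.
elim: l => [|l IH]; first by rewrite /row_count big_geq.
case: l IH => [|l] IH; first by rewrite /row_count big_geq.
rewrite /row_count big_nat_recr //=.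
case a_kl: (greedyA n k l.+1); last by rewrite addn0.
have [k_gt0 _] := greedyA_gt0 a_kl.
by move: a_kl; rewrite greedyA_unfold // addn1 => /and3P[].
Qed.

Lemma col_count_leS n k l : 0 < k -> col_count n k l <= col_count n k.+1 l.
Proof. by move=> k_gt0; rewrite /col_count big_nat_recr ?leq_addr. Qed.

Lemma exists_zero_of_sum_lt m p (F : nat -> nat) :
  \sum_(m <= j < p) F j < p - m -> exists2 j, m <= j < p & F j = 0.
Proof.
move=> lt_sum; case: (boolP (has (fun j => F j == 0) (index_iota m p))).
  by case/hasP=> j; rewrite mem_index_iota => mjp /eqP; exists j.
move/hasPn=> F_gt0; move: lt_sum; rewrite ltnNge => /negP[].
rewrite -[p - m]muln1 -sum_nat_const_nat big_seq_cond [X in _ <= X]big_seq_cond.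
by apply: leq_sum => j /andP[j_in _]; rewrite lt0n F_gt0.
Qed.

Lemma exists_empty_column n k :
  exists2 l, 0 < l <= (k.-1 * n.+1).+1 & col_count n k l = 0.
Proof.
set p := (k.-1 * n.+1).+2.
have [l /andP[l_gt0 ltlp] col0] : exists2 l, 1 <= l < p & col_count n k l = 0.
  apply: exists_zero_of_sum_lt; rewrite subn1 ltnS /col_count exchange_big_nat /=.
  apply: (@leq_trans (\sum_(1 <= i < k) n.+1)).
    by apply: leq_sum => i _; apply: row_count_le.
  by rewrite sum_nat_const_nat subn1.
by exists l; rewrite ?l_gt0.
Qed.

Lemma row_has_one n k : 0 < k -> exists j, 0 < j /\ greedyA n k j.
Proof.
move=> k_gt0; have [l /andP[l_gt0 ltlp] col0] := exists_empty_column n k.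
case: (boolP (has (greedyA n k) (index_iota 1 l))).
  by case/hasP=> j; rewrite mem_index_iota => /andP[j_gt0 _]; exists j.
move/hasPn=> row_empty; exists l; split=> //.
rewrite greedyA_after_empty_row ?col0 // => j lt_jl.
by apply: row_empty; rewrite mem_index_iota.
Qed.

Lemma first_one_monotone n i j1 j2 : 0 < i ->
  (forall j, 0 < j < j1 -> ~~ greedyA n i j) ->
  greedyA n i.+1 j2 -> (forall j, 0 < j < j2 -> ~~ greedyA n i.+1 j) ->
  j1 <= j2.
Proof.
move=> i_gt0 row_i_empty a_i1j2 row_i1_empty; rewrite leqNgt; apply/negP => lt_j2j1.
have [_ j2_gt0] := greedyA_gt0 a_i1j2.
have row_i_empty_j2 j : 0 < j < j2 -> ~~ greedyA n i j.
  by case/andP=> j_gt0 lt_jj2; rewrite row_i_empty // j_gt0 (ltn_trans lt_jj2).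
have : ~~ greedyA n i j2 by rewrite row_i_empty // j2_gt0.
rewrite greedyA_after_empty_row // -leqNgt => col_full.
move: a_i1j2; rewrite greedyA_after_empty_row // ltnNge.
by rewrite (leq_trans col_full (col_count_leS n i j2 i_gt0)).
Qed.

Theorem lemma3p2 (n : nat) (hn : 0 < n) :
  (forall i, 0 < i -> exists j, 0 < j /\ greedyA n i j) /\
  (forall i j1 j2, 0 < i ->
     greedyA n i j1 -> (forall j, 0 < j < j1 -> ~~ greedyA n i j) ->
     greedyA n i.+1 j2 -> (forall j, 0 < j < j2 -> ~~ greedyA n i.+1 j) ->
     j1 <= j2).
Proof.
split; first exact: row_has_one.
by move=> i j1 j2 i_gt0 _; apply: first_one_monotone.
Qed.
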